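(* Let $\beta\ge0$, $B>0$ and $\epsilon\in(0,1/5)$. There is a constant $C>0$ depending only on $\epsilon,\beta,B$ such that for all $n\ge C$ and all $a,b$ with $n^{-2\epsilon/5}<a<b\le B$, $$Z'_{a,b}:=\int_{\Gamma_{a,b}}e^{\beta n^{-1}S_4(f)}\,df\ \le\ \exp\Big(nL(a,b)+\frac{Cn^{4/5+\epsilon}}{b-a}\Big).$$
   Context: Let $V$ be a finite set with $n=|V|$ and $df$ Lebesgue measure on $\mathbb{C}^V\cong\mathbb{R}^{2n}$. For $f\in\mathbb{C}^V$ and $k\ge2$, $S_k(f)=\sum_{x\in V}|f_x|^k$. For $0<a<b$, $$\Gamma_{a,b}=\{f\in\mathbb{C}^V:\ a^2n^2(1-n^{-1/5})\le S_4(f)\le a^2n^2(1+n^{-1/5}),\ bn(1-n^{-1/5})\le S_2(f)\le bn(1+n^{-1/5})\}.$$ Define $L(a,b)=\beta a^2+\log(b-a)+\log\pi+1$. *)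

From Stdlib Require Import Reals Lra Lia.
Open Scope R_scope.

(* Points of R^m are represented as z : nat -> R, only coordinates 0..m-1 matter. *)

Fixpoint fsum (n : nat) (g : nat -> R) : R :=
  match n with
  | O => 0
  | S k => fsum k g + g k
  end.

Fixpoint fprod (n : nat) (g : nat -> R) : R :=
  match n with
  | O => 1
  | S k => fprod k g * g k
  end.

Record box := mkBox { lo : nat -> R; hi : nat -> R }.

Definition box_vol (m : nat) (Q : box) : R :=
  fprod m (fun i => Rmax 0 (hi Q i - lo Q i)).

Definition in_box (m : nat) (Q : box) (z : nat -> R) : Prop :=
  forall i, (i < m)%nat -> lo Q i <= z i <= hi Q i.

Definition lebesgue_outer_le (m : nat) (A : (nat -> R) -> Prop) (x : R) : Prop :=
  forall delta : R, delta > 0 ->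
    exists Q : nat -> box,
      (forall z, A z -> exists k, in_box m (Q k) z) /\
      (forall N : nat, fsum N (fun k => box_vol m (Q k)) <= x + delta).

(* C^V with V = {0,...,n-1}: f_x = z(2x) + i z(2x+1). *)
Definition cabs (z : nat -> R) (x : nat) : R :=
  sqrt (z (2 * x)%nat ^ 2 + z (2 * x + 1)%nat ^ 2).

Definition Sk (n k : nat) (z : nat -> R) : R := fsum n (fun x => cabs z x ^ k).

Definition Gamma (n : nat) (a b : R) (z : nat -> R) : Prop :=
  let N := INR n in
  let e := Rpower N (-(1/5)) in
  a ^ 2 * N ^ 2 * (1 - e) <= Sk n 4 z <= a ^ 2 * N ^ 2 * (1 + e) /\
  b * N * (1 - e) <= Sk n 2 z <= b * N * (1 + e).

Definition Lfun (beta a b : R) : R := beta * a ^ 2 + ln (b - a) + ln PI + 1.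

(* Subgraph in R^{2n+1} of  1_{Gamma_{a,b}}(f) exp(beta n^{-1} S_4(f)),
   last coordinate (index 2n) is the height. Its Lebesgue measure is Z'_{a,b}. *)
Definition Zsubgraph (beta : R) (n : nat) (a b : R) (w : nat -> R) : Prop :=
  Gamma n a b w /\
  0 <= w (2 * n)%nat <= exp (beta / INR n * Sk n 4 w).

(* Cover the subgraph by boxes. The height is at most [exp (beta a^2 n (1 + n^(-1/5)))]. Split
   each [|f_x|^2] into levels of width [h = 1/n]; the points with a prescribed level vector form
   a product of planar annuli of area [pi h], each covered by boxes of total area
   [pi (h + h^2)]. On [Gamma_{a,b}] the level vector has total cost at most [Lam], where a level
   [v] costs [lam v] if [v <= sqrt n] and [m = ln (n^2 (2B + 2))] otherwise: [S_2 <= b n (1 + e)]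
   bounds the total mass, and [S_4 >= a^2 n^2 (1 - e)] forces the few large coordinates to carry
   mass at least about [a n]. Weighting the admissible level vectors by [exp (Lam - cost)] bounds
   the volume by [exp Lam (pi (h + h^2) sum_j exp (- cost (j h)))^n]. With
   [lam = n / (b n (1 + e) - a n (1 - e))], so that [1 / lam ~ b - a], the geometric sum is about
   [1 / (lam h)], which produces [n (log pi + log (b - a))], while [lam] times the total mass
   produces the [+ n]; all remaining terms are [O(n^(4/5 + eps) / (b - a))]. *)

From Stdlib Require Import Reals Lra Lia List ZArith.
From Coquelicot Require Import Coquelicot.
Import ListNotations.
Open Scope R_scope.

Lemma fsum_ext n f g : (forall i, (i < n)%nat -> f i = g i) -> fsum n f = fsum n g.
Proof.
  induction n as [|n IH]; intros H; cbn [fsum]; [reflexivity|].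
  rewrite IH by (intros; apply H; lia). rewrite H by lia. reflexivity.
Qed.

Lemma fsum_le n f g : (forall i, (i < n)%nat -> f i <= g i) -> fsum n f <= fsum n g.
Proof.
  induction n as [|n IH]; intros H; cbn [fsum]; [lra|].
  assert (fsum n f <= fsum n g) by (apply IH; intros; apply H; lia).
  pose proof (H n ltac:(lia)). lra.
Qed.

Lemma fsum_const n c : fsum n (fun _ => c) = INR n * c.
Proof. induction n; cbn [fsum]; [simpl; ring | rewrite IHn, S_INR; ring]. Qed.

Lemma fsum_nonneg n f : (forall i, (i < n)%nat -> 0 <= f i) -> 0 <= fsum n f.
Proof.
  intros H. replace 0 with (fsum n (fun _ => 0)) by (rewrite fsum_const; ring).
  apply fsum_le; auto.
Qed.

Lemma fsum_plus n f g : fsum n (fun i => f i + g i) = fsum n f + fsum n g.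
Proof. induction n; cbn [fsum]; [ring | rewrite IHn; ring]. Qed.

Lemma fsum_scal n c f : fsum n (fun i => c * f i) = c * fsum n f.
Proof. induction n; cbn [fsum]; [ring | rewrite IHn; ring]. Qed.

Lemma fsum_minus n f g : fsum n (fun i => f i - g i) = fsum n f - fsum n g.
Proof. induction n; cbn [fsum]; [ring | rewrite IHn; ring]. Qed.

Lemma fsum_shift n g : fsum (S n) g = g 0%nat + fsum n (fun k => g (S k)).
Proof.
  induction n as [|n IH]; [simpl; ring|].
  change (fsum (S (S n)) g) with (fsum (S n) g + g (S n)). rewrite IH. simpl. ring.
Qed.

Lemma fsum_telescope n g : fsum n (fun i => g (S i) - g i) = g n - g 0%nat.
Proof. induction n; cbn [fsum]; [ring | rewrite IHn; ring]. Qed.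

Lemma fsum_term_le n f x :
  (forall i, (i < n)%nat -> 0 <= f i) -> (x < n)%nat -> f x <= fsum n f.
Proof.
  induction n as [|n IH]; intros H Hx; [lia|]. cbn [fsum].
  destruct (Nat.eq_dec x n) as [->|Hne].
  - assert (0 <= fsum n f) by (apply fsum_nonneg; intros; apply H; lia). lra.
  - assert (f x <= fsum n f) by (apply IH; [intros; apply H; lia | lia]).
    pose proof (H n ltac:(lia)). lra.
Qed.

Lemma fsum_sqr_le_sqr_fsum n g : (forall i, (i < n)%nat -> 0 <= g i) ->
  fsum n (fun i => g i * g i) <= fsum n g * fsum n g.
Proof.
  induction n as [|n IH]; intros H; cbn [fsum]; [lra|].
  assert (fsum n (fun i => g i * g i) <= fsum n g * fsum n g) by (apply IH; intros; apply H; lia).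
  assert (0 <= fsum n g) by (apply fsum_nonneg; intros; apply H; lia).
  pose proof (H n ltac:(lia)). nra.
Qed.

Lemma fsum_geom_le q n : 0 <= q < 1 -> fsum n (fun j => q ^ j) <= 1 / (1 - q).
Proof.
  intros Hq. assert (E : fsum n (fun j => q ^ j) = (1 - q ^ n) / (1 - q)).
  { induction n; cbn [fsum]; [simpl; field; lra|]. rewrite IHn. simpl. field. lra. }
  rewrite E. assert (0 <= q ^ n) by (apply pow_le; lra).
  unfold Rdiv. apply Rmult_le_compat_r; [left; apply Rinv_0_lt_compat|]; lra.
Qed.

Lemma fprod_ext n f g : (forall i, (i < n)%nat -> f i = g i) -> fprod n f = fprod n g.
Proof.
  induction n as [|n IH]; intros H; cbn [fprod]; [reflexivity|].
  rewrite IH by (intros; apply H; lia). rewrite H by lia. reflexivity.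
Qed.

Lemma fprod_nonneg n f : (forall i, (i < n)%nat -> 0 <= f i) -> 0 <= fprod n f.
Proof.
  induction n as [|n IH]; intros H; cbn [fprod]; [lra|].
  apply Rmult_le_pos; [apply IH; intros; apply H | apply H]; lia.
Qed.

Lemma fprod_exp_opp n f : fprod n (fun x => exp (- f x)) = exp (- fsum n f).
Proof.
  induction n; cbn [fprod fsum].
  - rewrite Ropp_0, exp_0. reflexivity.
  - rewrite IHn, <- exp_plus. f_equal. ring.
Qed.

Lemma exp_le_exp x y : x <= y -> exp x <= exp y.
Proof. intros [H|H]; [left; apply exp_increasing, H | rewrite H; right; reflexivity]. Qed.

Definition lsum (l : list R) : R := fold_right Rplus 0 l.

Lemma lsum_app l1 l2 : lsum (l1 ++ l2) = lsum l1 + lsum l2.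
Proof. induction l1; simpl; [ring | rewrite IHl1; ring]. Qed.

Lemma lsum_map_le {T} (f g : T -> R) l :
  (forall x, In x l -> f x <= g x) -> lsum (map f l) <= lsum (map g l).
Proof.
  induction l as [|y l IH]; simpl; intros H; [lra|].
  pose proof (H y (or_introl eq_refl)).
  assert (lsum (map f l) <= lsum (map g l)) by (apply IH; auto). lra.
Qed.

Lemma lsum_map_ext {T} (f g : T -> R) l :
  (forall x, In x l -> f x = g x) -> lsum (map f l) = lsum (map g l).
Proof. intros H. apply Rle_antisym; apply lsum_map_le; intros x Hx; rewrite (H x Hx); lra. Qed.

Lemma lsum_map_nonneg {T} (f : T -> R) l :
  (forall x, In x l -> 0 <= f x) -> 0 <= lsum (map f l).
Proof.
  intros H. replace 0 with (lsum (map (fun _ => 0) l)).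
  - apply lsum_map_le. exact H.
  - clear H. induction l; simpl; [reflexivity | rewrite IHl; ring].
Qed.

Lemma lsum_map_scal {T} (c : R) (f : T -> R) l :
  lsum (map (fun x => c * f x) l) = c * lsum (map f l).
Proof. induction l; simpl; [ring | rewrite IHl; ring]. Qed.

Lemma lsum_map_scal_r {T} (c : R) (f : T -> R) l :
  lsum (map (fun x => f x * c) l) = lsum (map f l) * c.
Proof. induction l; simpl; [ring | rewrite IHl; ring]. Qed.

Lemma lsum_flat_map {T U} (F : U -> R) (g : T -> list U) l :
  lsum (map F (flat_map g l)) = lsum (map (fun x => lsum (map F (g x))) l).
Proof. induction l; simpl; [reflexivity|]. rewrite map_app, lsum_app, IHl. reflexivity. Qed.

Lemma lsum_seq f n : lsum (map f (seq 0 n)) = fsum n f.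
Proof. induction n; [reflexivity|]. rewrite seq_S, map_app, lsum_app, IHn. simpl. ring. Qed.

Lemma lsum_filter_le {T} (p : T -> bool) (F G : T -> R) l :
  (forall x, In x l -> p x = true -> F x <= G x) -> (forall x, In x l -> 0 <= G x) ->
  lsum (map F (filter p l)) <= lsum (map G l).
Proof.
  induction l as [|y l IH]; simpl; intros H1 H2; [lra|].
  assert (lsum (map F (filter p l)) <= lsum (map G l)) by (apply IH; auto).
  destruct (p y) eqn:E; simpl.
  - pose proof (H1 y (or_introl eq_refl) E). lra.
  - pose proof (H2 y (or_introl eq_refl)). lra.
Qed.

Lemma fsum_nth_le_lsum (l : list R) n :
  (forall x, In x l -> 0 <= x) -> fsum n (fun k => nth k l 0) <= lsum l.
Proof.
  revert n. induction l as [|y l IH]; intros n H.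
  - rewrite (fsum_ext n _ (fun _ => 0)) by (intros [|i] _; reflexivity).
    rewrite fsum_const. simpl. lra.
  - assert (0 <= lsum l).
    { replace l with (map (fun x => x) l) by apply map_id.
      apply lsum_map_nonneg. intros; apply H; simpl; auto. }
    destruct n as [|n].
    + simpl. pose proof (H y (or_introl eq_refl)). lra.
    + rewrite fsum_shift. simpl.
      pose proof (IH n (fun x Hx => H x (or_intror Hx))). lra.
Qed.

Lemma box_vol_nonneg m Q : 0 <= box_vol m Q.
Proof. apply fprod_nonneg. intros; apply Rmax_l. Qed.

Definition box0 : box := mkBox (fun _ => 0) (fun _ => 0).

Lemma box0_vol m : (1 <= m)%nat -> box_vol m box0 = 0.
Proof.
  intros Hm. destruct m as [|m]; [lia|]. unfold box_vol. cbn [fprod lo hi box0].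
  rewrite Rminus_0_r, Rmax_left by lra. ring.
Qed.

(* A finite cover is padded by degenerate boxes into a countable one. *)
Lemma lebesgue_outer_le_of_list m A L x : (1 <= m)%nat ->
  (forall z, A z -> exists Q, In Q L /\ in_box m Q z) ->
  lsum (map (box_vol m) L) <= x -> lebesgue_outer_le m A x.
Proof.
  intros Hm Hcov Hs delta Hd. exists (fun k => nth k L box0). split.
  - intros z Hz. destruct (Hcov z Hz) as [Q [HQ Hin]].
    destruct (In_nth L Q box0 HQ) as [k [_ Hk]]. exists k. rewrite Hk. exact Hin.
  - intros N.
    rewrite (fsum_ext N _ (fun k => nth k (map (box_vol m) L) 0))
      by (intros i _; rewrite <- (box0_vol m Hm), map_nth; reflexivity).
    assert (fsum N (fun k => nth k (map (box_vol m) L) 0) <= lsum (map (box_vol m) L)).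
    { apply fsum_nth_le_lsum. intros y Hy. apply in_map_iff in Hy as [Q [<- _]].
      apply box_vol_nonneg. }
    lra.
Qed.

Lemma lebesgue_outer_le_mono m A x y :
  lebesgue_outer_le m A x -> x <= y -> lebesgue_outer_le m A y.
Proof.
  intros H Hxy delta Hd. destruct (H delta Hd) as [Q [HQ Hvol]].
  exists Q. split; [exact HQ|]. intros N. specialize (Hvol N). lra.
Qed.

Definition box_ext (B : box) (m : nat) (a b : R) : box :=
  mkBox (fun i => if Nat.eqb i m then a else lo B i) (fun i => if Nat.eqb i m then b else hi B i).

Lemma box_ext_vol B m a b : box_vol (S m) (box_ext B m a b) = box_vol m B * Rmax 0 (b - a).
Proof.
  unfold box_vol. cbn [fprod box_ext lo hi]. rewrite Nat.eqb_refl. f_equal.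
  apply fprod_ext. intros i Hi. cbn [box_ext lo hi].
  replace (Nat.eqb i m) with false by (symmetry; apply Nat.eqb_neq; lia). reflexivity.
Qed.

Lemma in_box_ext B m a b z :
  in_box m B z -> a <= z m <= b -> in_box (S m) (box_ext B m a b) z.
Proof.
  intros HB Hz i Hi. cbn [box_ext lo hi].
  destruct (Nat.eqb_spec i m) as [->|Hne]; [exact Hz | apply HB; lia].
Qed.

Definition box_ext2 (B : box) (m : nat) (Q : box) : box :=
  box_ext (box_ext B m (lo Q 0) (hi Q 0)) (S m) (lo Q 1) (hi Q 1).

Lemma box_vol2 Q : box_vol 2 Q = Rmax 0 (hi Q 0 - lo Q 0) * Rmax 0 (hi Q 1 - lo Q 1).
Proof. unfold box_vol. simpl. ring. Qed.

Lemma box_ext2_vol B m Q : box_vol (S (S m)) (box_ext2 B m Q) = box_vol m B * box_vol 2 Q.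
Proof. unfold box_ext2. rewrite !box_ext_vol, box_vol2. ring. Qed.

Lemma in_box_ext2 B m Q z :
  in_box m B z -> in_box 2 Q (fun i => z (m + i)%nat) -> in_box (S (S m)) (box_ext2 B m Q) z.
Proof.
  intros HB HQ. pose proof (HQ 0%nat ltac:(lia)) as H0. pose proof (HQ 1%nat ltac:(lia)) as H1.
  cbv beta in H0, H1. rewrite Nat.add_0_r in H0. rewrite Nat.add_1_r in H1.
  apply in_box_ext; [apply in_box_ext|]; assumption.
Qed.

(** * Area of a quarter disc by Riemann sums *)

(* [sector_area t = \int_0^(sin t) sqrt (1 - s^2) ds] for [0 <= t <= PI/2]. *)
Definition sector_area (t : R) : R := (t + sin t * cos t) / 2.

Lemma sector_area_step a b : 0 <= a <= b -> b <= PI / 2 ->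
  (sin b - sin a) * cos b <= sector_area b - sector_area a <= (sin b - sin a) * cos a.
Proof.
  intros Hab Hb. pose proof PI_RGT_0.
  destruct (Req_dec a b) as [->|Hne]; [split; lra|].
  assert (Hlt : a < b) by lra. split.
  - destruct (MVT_cor2 (fun t => sector_area t - (sin t - sin a) * cos t)
        (fun t => (sin t - sin a) * sin t) a b Hlt) as [c [Hc Hc2]].
    { intros c Hc. apply is_derive_Reals. unfold sector_area. auto_derive; auto.
      pose proof (sin2_cos2 c). unfold Rsqr in *. nra. }
    assert (sin a <= sin c) by (apply sin_incr_1; lra).
    assert (0 <= sin c) by (apply sin_ge_0; lra).
    assert (0 <= (sin c - sin a) * sin c * (b - a)) by (apply Rmult_le_pos; nra).
    lra.
  - destruct (MVT_cor2 (fun t => sector_area t - sin t * cos a)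
        (fun t => cos t * (cos t - cos a)) a b Hlt) as [c [Hc Hc2]].
    { intros c Hc. apply is_derive_Reals. unfold sector_area. auto_derive; auto.
      pose proof (sin2_cos2 c). unfold Rsqr in *. nra. }
    assert (0 <= cos c) by (apply cos_ge_0; lra).
    assert (cos c <= cos a) by (apply cos_decr_1; lra).
    assert (cos c * (cos c - cos a) * (b - a) <= 0) by (apply Rmult_le_0_r; nra).
    lra.
Qed.

Lemma asin_nonneg x : 0 <= x <= 1 -> 0 <= asin x.
Proof.
  intros Hx. pose proof (asin_bound x). pose proof PI_RGT_0.
  apply sin_incr_0; try lra. rewrite sin_0, sin_asin; lra.
Qed.

Lemma asin_le x y : 0 <= x <= y -> y <= 1 -> asin x <= asin y.
Proof.
  intros. pose proof (asin_bound x). pose proof (asin_bound y).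
  apply sin_incr_0; try lra. rewrite !sin_asin; lra.
Qed.

Lemma Rdiv_le_1 x y : 0 < y -> x <= y -> x / y <= 1.
Proof. intros. apply Rmult_le_reg_r with y; [lra|]. unfold Rdiv. rewrite Rmult_assoc, Rinv_l; lra. Qed.

(* Half-width of the disc [x^2 + y^2 <= rho] at height [y]; it is [0] above the disc since
   [sqrt] vanishes on negative numbers. *)
Definition half_chord (rho y : R) : R := sqrt (rho - y * y).

(* Area of the part of the quarter disc of squared radius [rho] below height [y >= 0]. *)
Definition quarter_disc_area (rho y : R) : R :=
  rho * sector_area (asin (Rmin y (sqrt rho) / sqrt rho)).

Lemma half_chord_nonneg rho y : 0 <= half_chord rho y.
Proof. apply sqrt_pos. Qed.

Lemma half_chord_0 rho : half_chord rho 0 = sqrt rho.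
Proof. unfold half_chord. rewrite Rmult_0_l, Rminus_0_r. reflexivity. Qed.

Lemma half_chord_above rho y : 0 <= rho -> sqrt rho <= y -> half_chord rho y = 0.
Proof.
  intros Hr Hy. apply sqrt_neg_0.
  pose proof (sqrt_pos rho). pose proof (sqrt_sqrt rho Hr). nra.
Qed.

Lemma half_chord_asin rho y : 0 < rho -> 0 <= y <= sqrt rho ->
  half_chord rho y = sqrt rho * cos (asin (y / sqrt rho)).
Proof.
  intros Hr Hy.
  assert (Hs : 0 < sqrt rho) by (apply sqrt_lt_R0; lra).
  assert (Hrr : sqrt rho * sqrt rho = rho) by (apply sqrt_sqrt; lra).
  assert (0 <= y / sqrt rho <= 1) by (split; [apply Rdiv_le_0_compat | apply Rdiv_le_1]; lra).
  rewrite cos_asin by lra. unfold half_chord.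
  rewrite <- sqrt_mult_alt by lra. f_equal. unfold Rsqr.
  set (r := sqrt rho) in *. rewrite <- Hrr. field. lra.
Qed.

Lemma quarter_disc_area_0 rho : 0 < rho -> quarter_disc_area rho 0 = 0.
Proof.
  intros Hr. unfold quarter_disc_area. rewrite Rmin_left by apply sqrt_pos.
  unfold Rdiv. rewrite Rmult_0_l, asin_0. unfold sector_area. rewrite sin_0. field.
Qed.

Lemma quarter_disc_area_top rho y : 0 < rho -> sqrt rho <= y ->
  quarter_disc_area rho y = PI * rho / 4.
Proof.
  intros Hr Hy. unfold quarter_disc_area. rewrite Rmin_right by lra.
  assert (0 < sqrt rho) by (apply sqrt_lt_R0; lra).
  replace (sqrt rho / sqrt rho) with 1 by (field; lra).
  rewrite asin_1. unfold sector_area. rewrite sin_PI2, cos_PI2. field.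
Qed.

Lemma quarter_disc_area_step_below rho y y' : 0 < rho -> 0 <= y <= y' -> y' <= sqrt rho ->
  (y' - y) * half_chord rho y' <= quarter_disc_area rho y' - quarter_disc_area rho y
  <= (y' - y) * half_chord rho y.
Proof.
  intros Hr Hy Hy'. unfold quarter_disc_area. rewrite !Rmin_left by lra.
  rewrite !half_chord_asin by lra.
  set (r := sqrt rho) in *.
  assert (Hs : 0 < r) by (apply sqrt_lt_R0; lra).
  assert (Hrr : r * r = rho) by (apply sqrt_sqrt; lra).
  set (s := y / r). set (s' := y' / r).
  assert (Hss : 0 <= s <= s').
  { split; [apply Rdiv_le_0_compat; lra | apply Rmult_le_compat_r; [left; apply Rinv_0_lt_compat|]; lra]. }
  assert (Hs1 : s' <= 1) by (apply Rdiv_le_1; lra).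
  assert (Ha : 0 <= asin s <= asin s') by (split; [apply asin_nonneg | apply asin_le]; lra).
  destruct (sector_area_step (asin s) (asin s') Ha (proj2 (asin_bound s'))) as [H1 H2].
  rewrite !sin_asin in H1, H2 by lra.
  replace (y' - y) with (r * (s' - s)) by (unfold s, s'; field; lra).
  rewrite <- Hrr. split; nra.
Qed.

Lemma quarter_disc_area_step rho y y' : 0 < rho -> 0 <= y <= y' ->
  (y' - y) * half_chord rho y' <= quarter_disc_area rho y' - quarter_disc_area rho y
  <= (y' - y) * half_chord rho y.
Proof.
  intros Hr Hy. set (r := sqrt rho).
  assert (Hconst : forall z, r <= z -> quarter_disc_area rho z = quarter_disc_area rho r).
  { intros z Hz. unfold quarter_disc_area. fold r. rewrite !Rmin_right by lra. reflexivity. }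
  destruct (Rle_dec y' r) as [Hle|Hgt]; [apply quarter_disc_area_step_below; auto|].
  rewrite (half_chord_above rho y'), (Hconst y') by (unfold r in *; lra).
  destruct (Rle_dec r y) as [Hry|Hyr].
  - rewrite (Hconst y), (half_chord_above rho y) by (unfold r in *; lra). lra.
  - destruct (quarter_disc_area_step_below rho y r Hr ltac:(lra) ltac:(unfold r; lra)) as [H1 H2].
    rewrite (half_chord_above rho r) in H1 by (unfold r; lra).
    pose proof (half_chord_nonneg rho y).
    assert ((r - y) * half_chord rho y <= (y' - y) * half_chord rho y)
      by (apply Rmult_le_compat_r; lra).
    rewrite Rmult_0_r. lra.
Qed.

Definition lower_sum (rho s : R) (M : nat) : R := fsum M (fun i => s * half_chord rho (INR (S i) * s)).
Definition upper_sum (rho s : R) (M : nat) : R := fsum M (fun i => s * half_chord rho (INR i * s)).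

Lemma riemann_sums_bracket rho s M : 0 < rho -> 0 < s -> sqrt rho <= INR M * s ->
  lower_sum rho s M <= PI * rho / 4 <= upper_sum rho s M.
Proof.
  intros Hr Hs HM.
  pose proof (fsum_telescope M (fun i => quarter_disc_area rho (INR i * s))) as Ht.
  cbv beta in Ht. rewrite Rmult_0_l, quarter_disc_area_0, quarter_disc_area_top, Rminus_0_r in Ht
    by auto.
  assert (Hstep : forall i, (i < M)%nat ->
    s * half_chord rho (INR (S i) * s)
      <= quarter_disc_area rho (INR (S i) * s) - quarter_disc_area rho (INR i * s)
      <= s * half_chord rho (INR i * s)).
  { intros i _. pose proof (pos_INR i).
    pose proof (quarter_disc_area_step rho (INR i * s) (INR (S i) * s) Hr
      ltac:(rewrite S_INR; split; nra)) as Hq.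
    replace (INR (S i) * s - INR i * s) with s in Hq by (rewrite S_INR; ring). exact Hq. }
  unfold lower_sum, upper_sum. rewrite <- Ht.
  split; apply fsum_le; intros i Hi; apply Hstep; auto.
Qed.

Lemma riemann_sums_gap rho s M : 0 <= rho -> sqrt rho <= INR M * s ->
  upper_sum rho s M = lower_sum rho s M + s * sqrt rho.
Proof.
  intros Hr HM. unfold upper_sum, lower_sum.
  pose proof (fsum_telescope M (fun i => s * half_chord rho (INR i * s))) as Ht.
  cbv beta in Ht. rewrite fsum_minus, Rmult_0_l, half_chord_0, half_chord_above in Ht by auto.
  lra.
Qed.

Lemma lower_sum_ge rho s M : 0 <= rho -> 0 < s -> sqrt rho <= INR M * s ->
  PI * rho / 4 - s * sqrt rho <= lower_sum rho s M.
Proof.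
  intros Hr Hs HM. destruct (Req_dec rho 0) as [->|Hne].
  - rewrite sqrt_0. replace (PI * 0 / 4 - s * 0) with 0 by field.
    apply fsum_nonneg. intros. apply Rmult_le_pos; [lra | apply half_chord_nonneg].
  - pose proof (riemann_sums_bracket rho s M ltac:(lra) Hs HM).
    pose proof (riemann_sums_gap rho s M Hr HM). lra.
Qed.

Lemma upper_sum_le rho s M : 0 < rho -> 0 < s -> sqrt rho <= INR M * s ->
  upper_sum rho s M <= PI * rho / 4 + s * sqrt rho.
Proof.
  intros Hr Hs HM. pose proof (riemann_sums_bracket rho s M Hr Hs HM).
  pose proof (riemann_sums_gap rho s M ltac:(lra) HM). lra.
Qed.

(** * Covering an annulus by boxes *)

Definition nat_up (x : R) : nat := Z.to_nat (up x).

Lemma nat_up_ge x : x <= INR (nat_up x).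
Proof.
  unfold nat_up. destruct (archimed x) as [Hup _].
  destruct (Z_lt_le_dec (up x) 0) as [Hn|Hp].
  - apply IZR_lt in Hn. pose proof (pos_INR (Z.to_nat (up x))). lra.
  - rewrite INR_IZR_INZ, Z2Nat.id by exact Hp. lra.
Qed.

Lemma grid_interval M s y : (0 < M)%nat -> 0 <= y <= INR M * s ->
  exists i, (i < M)%nat /\ INR i * s <= y <= INR (S i) * s.
Proof.
  induction M as [|M IH]; intros HM Hy; [lia|].
  destruct (Nat.eq_dec M 0) as [->|HM0].
  - exists 0%nat. split; [lia|]. simpl in *. lra.
  - destruct (Rle_dec y (INR M * s)) as [Hle|Hgt].
    + destruct (IH ltac:(lia) ltac:(lra)) as [i [Hi Hiy]]. exists i. split; [lia | exact Hiy].
    + exists M. split; [lia | lra].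
Qed.

Definition nonnegb (x : R) : bool := if Rle_dec 0 x then true else false.
Definition mirror_lo (pos : bool) (a b : R) : R := if pos then a else - b.
Definition mirror_hi (pos : bool) (a b : R) : R := if pos then b else - a.

Lemma mirror_spec x a b :
  a <= Rabs x <= b -> mirror_lo (nonnegb x) a b <= x <= mirror_hi (nonnegb x) a b.
Proof.
  unfold mirror_lo, mirror_hi, nonnegb. destruct (Rle_dec 0 x).
  - rewrite Rabs_right by lra. auto.
  - rewrite Rabs_left by lra. lra.
Qed.

(* The image of a box of the first quadrant in the quadrant of signs [sx], [sy]. *)
Definition reflect_box (sx sy : bool) (Q : box) : box :=
  mkBox (fun k => if Nat.eqb k 0 then mirror_lo sx (lo Q 0) (hi Q 0) else mirror_lo sy (lo Q 1) (hi Q 1))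
        (fun k => if Nat.eqb k 0 then mirror_hi sx (lo Q 0) (hi Q 0) else mirror_hi sy (lo Q 1) (hi Q 1)).

Lemma mirror_width pos a b : mirror_hi pos a b - mirror_lo pos a b = b - a.
Proof. destruct pos; simpl; ring. Qed.

Lemma reflect_box_vol sx sy Q : box_vol 2 (reflect_box sx sy Q) = box_vol 2 Q.
Proof. rewrite !box_vol2. cbn [reflect_box lo hi Nat.eqb]. rewrite !mirror_width. reflexivity. Qed.

Lemma in_reflect_box Q p : in_box 2 Q (fun k => Rabs (p k)) ->
  in_box 2 (reflect_box (nonnegb (p 0%nat)) (nonnegb (p 1%nat)) Q) p.
Proof.
  intros H [|[|k]] Hk; [| | lia]; cbn [reflect_box lo hi Nat.eqb];
    apply mirror_spec; apply H; lia.
Qed.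

(* The strip [i s <= y <= (i+1) s] of the quarter annulus [rho0 <= x^2 + y^2 <= rho1],
   enclosed in a box. *)
Definition annulus_strip (rho0 rho1 s : R) (i : nat) : box :=
  mkBox (fun k => if Nat.eqb k 0 then half_chord rho0 (INR (S i) * s) else INR i * s)
        (fun k => if Nat.eqb k 0 then half_chord rho1 (INR i * s) else INR (S i) * s).

Definition annulus_boxes (rho0 rho1 s : R) (M : nat) : list box :=
  flat_map (fun Q => [reflect_box true true Q; reflect_box true false Q;
                      reflect_box false true Q; reflect_box false false Q])
    (map (annulus_strip rho0 rho1 s) (seq 0 M)).

Lemma annulus_strip_vol rho0 rho1 s i : 0 <= rho0 <= rho1 -> 0 < s ->
  box_vol 2 (annulus_strip rho0 rho1 s i)
  = s * half_chord rho1 (INR i * s) - s * half_chord rho0 (INR (S i) * s).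
Proof.
  intros Hr Hs. rewrite box_vol2. cbn [annulus_strip lo hi Nat.eqb]. rewrite S_INR.
  assert (half_chord rho0 ((INR i + 1) * s) <= half_chord rho1 (INR i * s)).
  { apply sqrt_le_1_alt. pose proof (pos_INR i). nra. }
  rewrite !Rmax_right by lra. ring.
Qed.

Lemma annulus_boxes_vol rho0 rho1 s M : 0 <= rho0 <= rho1 -> 0 < s ->
  lsum (map (box_vol 2) (annulus_boxes rho0 rho1 s M))
  = 4 * (upper_sum rho1 s M - lower_sum rho0 s M).
Proof.
  intros Hr Hs. unfold annulus_boxes, upper_sum, lower_sum.
  rewrite lsum_flat_map, (lsum_map_ext _ (fun Q => 4 * box_vol 2 Q))
    by (intros Q _; simpl; rewrite !reflect_box_vol; ring).
  rewrite lsum_map_scal, map_map, lsum_seq, <- fsum_minus.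
  f_equal. apply fsum_ext. intros i _. apply annulus_strip_vol; auto.
Qed.

Lemma annulus_boxes_cover rho0 rho1 s M p : 0 <= rho0 -> 0 < s -> (0 < M)%nat ->
  sqrt rho1 <= INR M * s -> rho0 <= p 0%nat * p 0%nat + p 1%nat * p 1%nat <= rho1 ->
  exists Q, In Q (annulus_boxes rho0 rho1 s M) /\ in_box 2 Q p.
Proof.
  intros Hr0 Hs HM HMs Hp.
  set (x := Rabs (p 0%nat)). set (y := Rabs (p 1%nat)).
  assert (Hx0 : 0 <= x) by apply Rabs_pos. assert (Hy0 : 0 <= y) by apply Rabs_pos.
  assert (Hxy : rho0 <= x * x + y * y <= rho1) by (unfold x, y; rewrite <- !Rabs_mult, !Rabs_right by nra; lra).
  assert (Hyr : y <= sqrt rho1).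
  { rewrite <- (sqrt_square y) by exact Hy0. apply sqrt_le_1_alt. nra. }
  destruct (grid_interval M s y HM ltac:(lra)) as [i [Hi [Hy1 Hy2]]].
  pose proof (pos_INR i).
  assert (Hstrip : in_box 2 (annulus_strip rho0 rho1 s i) (fun k => Rabs (p k))).
  { intros [|[|k]] Hk; [| | lia]; cbn [annulus_strip lo hi Nat.eqb]; [|fold y; lra].
    fold x. unfold half_chord. rewrite <- (sqrt_square x) by exact Hx0.
    assert (INR i * s * (INR i * s) <= y * y) by (apply Rmult_le_compat; nra).
    assert (y * y <= INR (S i) * s * (INR (S i) * s)) by (apply Rmult_le_compat; lra).
    split; apply sqrt_le_1_alt; lra. }
  exists (reflect_box (nonnegb (p 0%nat)) (nonnegb (p 1%nat)) (annulus_strip rho0 rho1 s i)).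
  split; [|apply in_reflect_box, Hstrip].
  apply in_flat_map. exists (annulus_strip rho0 rho1 s i). split.
  - apply in_map, in_seq. lia.
  - destruct (nonnegb (p 0%nat)), (nonnegb (p 1%nat)); simpl; tauto.
Qed.

Definition annulus_cover (rho0 rho1 delta : R) : list box :=
  let M := S (nat_up (8 * rho1 / delta)) in annulus_boxes rho0 rho1 (sqrt rho1 / INR M) M.

Lemma annulus_cover_covers rho0 rho1 delta p : 0 <= rho0 -> 0 < rho1 ->
  rho0 <= p 0%nat * p 0%nat + p 1%nat * p 1%nat <= rho1 ->
  exists Q, In Q (annulus_cover rho0 rho1 delta) /\ in_box 2 Q p.
Proof.
  intros Hr0 Hr1 Hp. assert (HM : 0 < INR (S (nat_up (8 * rho1 / delta)))) by apply lt_0_INR, Nat.lt_0_succ.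
  apply annulus_boxes_cover; [exact Hr0 | | lia | | exact Hp].
  - apply Rdiv_lt_0_compat; [apply sqrt_lt_R0|]; lra.
  - right. field. lra.
Qed.

Lemma annulus_cover_vol rho0 rho1 delta : 0 <= rho0 <= rho1 -> 0 < rho1 -> 0 < delta ->
  lsum (map (box_vol 2) (annulus_cover rho0 rho1 delta)) <= PI * (rho1 - rho0) + delta.
Proof.
  intros Hr H1 Hd. unfold annulus_cover.
  set (M := S (nat_up (8 * rho1 / delta))).
  assert (HM : 8 * rho1 / delta + 1 <= INR M) by (unfold M; rewrite S_INR; pose proof (nat_up_ge (8 * rho1 / delta)); lra).
  set (r1 := sqrt rho1). assert (Hr1 : 0 < r1) by (apply sqrt_lt_R0; lra).
  assert (Hr11 : r1 * r1 = rho1) by (apply sqrt_sqrt; lra).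
  assert (HMp : 0 < INR M) by (pose proof (Rdiv_le_0_compat (8 * rho1) delta); lra).
  set (s := r1 / INR M). assert (Hs : 0 < s) by (apply Rdiv_lt_0_compat; lra).
  assert (HMs : INR M * s = r1) by (unfold s; field; lra).
  assert (Hr0 : sqrt rho0 <= r1) by (apply sqrt_le_1_alt; lra).
  pose proof (sqrt_pos rho0).
  rewrite annulus_boxes_vol by (auto; lra).
  pose proof (upper_sum_le rho1 s M H1 Hs ltac:(fold r1; lra)) as U1.
  pose proof (lower_sum_ge rho0 s M ltac:(lra) Hs ltac:(lra)) as L0.
  assert (8 * s * r1 <= delta).
  { replace (8 * s * r1) with (8 * rho1 / INR M) by (unfold s; rewrite <- Hr11; field; lra).
    assert (8 * rho1 <= delta * INR M).
    { assert (delta * (8 * rho1 / delta) = 8 * rho1) by (field; lra). nra. }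
    apply Rmult_le_reg_r with (INR M); [lra|].
    replace (8 * rho1 / INR M * INR M) with (8 * rho1) by (field; lra). lra. }
  fold r1 in U1. nra.
Qed.

(** * Level vectors and product covers *)

Definition level (h u : R) : nat := Z.to_nat (Int_part (u / h)).

Lemma level_spec h u : 0 < h -> 0 <= u ->
  INR (level h u) * h <= u <= INR (S (level h u)) * h.
Proof.
  intros Hh Hu. unfold level. destruct (base_Int_part (u / h)) as [H1 H2].
  assert (0 <= u / h) by (apply Rdiv_le_0_compat; lra).
  assert (Hz : (0 <= Int_part (u / h))%Z).
  { assert (IZR (-1) < IZR (Int_part (u / h))) by lra. apply lt_IZR in H0. lia. }
  rewrite S_INR, INR_IZR_INZ, Z2Nat.id by exact Hz.
  replace u with (u / h * h) at 2 3 by (field; lra).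
  split; apply Rmult_le_compat_r; lra.
Qed.

Fixpoint level_vectors (k J : nat) : list (list nat) :=
  match k with
  | O => [[]]
  | S k' => flat_map (fun l => map (fun j => l ++ [j]) (seq 0 (S J))) (level_vectors k' J)
  end.

Lemma level_vectors_length k J l : In l (level_vectors k J) -> length l = k.
Proof.
  revert l; induction k as [|k IH]; cbn [level_vectors]; intros l H.
  - destruct H as [<-|[]]. reflexivity.
  - apply in_flat_map in H as [l' [Hl' Hm]]. apply in_map_iff in Hm as [j [<- _]].
    rewrite length_app, (IH l' Hl'). simpl. lia.
Qed.

Lemma in_level_vectors k J (f : nat -> nat) : (forall x, (x < k)%nat -> (f x <= J)%nat) ->
  In (map f (seq 0 k)) (level_vectors k J).
Proof.
  induction k as [|k IH]; cbn [level_vectors]; intros H; [left; reflexivity|].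
  rewrite seq_S, map_app. apply in_flat_map. exists (map f (seq 0 k)). split.
  - apply IH. intros; apply H; lia.
  - apply in_map_iff. exists (f k). split; [reflexivity|]. apply in_seq.
    specialize (H k ltac:(lia)). lia.
Qed.

Lemma fprod_snoc k l j (phi : nat -> R) : length l = k ->
  fprod (S k) (fun x => phi (nth x (l ++ [j]) 0%nat)) = fprod k (fun x => phi (nth x l 0%nat)) * phi j.
Proof.
  intros Hl. cbn [fprod]. rewrite app_nth2, Hl, Nat.sub_diag by lia. simpl.
  f_equal. apply fprod_ext. intros i Hi. rewrite app_nth1 by lia. reflexivity.
Qed.

Lemma lsum_fprod_level_vectors k J (phi : nat -> R) :
  lsum (map (fun l => fprod k (fun x => phi (nth x l 0%nat))) (level_vectors k J))
  = fsum (S J) phi ^ k.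
Proof.
  induction k as [|k IH]; [simpl; ring|]. cbn [level_vectors]. rewrite lsum_flat_map.
  rewrite (lsum_map_ext _ (fun l => fprod k (fun x => phi (nth x l 0%nat)) * fsum (S J) phi)).
  - rewrite lsum_map_scal_r, IH. simpl. ring.
  - intros l Hl. rewrite map_map, <- lsum_seq, <- lsum_map_scal.
    apply lsum_map_ext. intros j _. apply fprod_snoc, (level_vectors_length _ J), Hl.
Qed.

Fixpoint prod_cover (cov : nat -> list box) (l : list nat) (k : nat) : list box :=
  match k with
  | O => [box0]
  | S k' => flat_map (fun B => map (box_ext2 B (2 * k')) (cov (nth k' l 0%nat))) (prod_cover cov l k')
  end.

Lemma prod_cover_vol cov l alpha k : 0 <= alpha ->
  (forall j, lsum (map (box_vol 2) (cov j)) <= alpha) ->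
  lsum (map (box_vol (2 * k)) (prod_cover cov l k)) <= alpha ^ k.
Proof.
  intros Ha Hcov. induction k as [|k IH]; [unfold box_vol; simpl; lra|].
  cbn [prod_cover]. rewrite lsum_flat_map. replace (2 * S k)%nat with (S (S (2 * k))) by lia.
  apply Rle_trans with (lsum (map (fun B => box_vol (2 * k) B * alpha) (prod_cover cov l k))).
  - apply lsum_map_le. intros B _. rewrite map_map.
    rewrite (lsum_map_ext _ (fun Q => box_vol (2 * k) B * box_vol 2 Q)) by (intros; apply box_ext2_vol).
    rewrite lsum_map_scal. apply Rmult_le_compat_l; [apply box_vol_nonneg | apply Hcov].
  - rewrite lsum_map_scal_r. simpl. rewrite Rmult_comm. apply Rmult_le_compat_l; auto.
Qed.

Lemma prod_cover_covers cov (P : nat -> (nat -> R) -> Prop) l k z :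
  (forall j p, P j p -> exists Q, In Q (cov j) /\ in_box 2 Q p) ->
  (forall x, (x < k)%nat -> P (nth x l 0%nat) (fun i => z (2 * x + i)%nat)) ->
  exists B, In B (prod_cover cov l k) /\ in_box (2 * k) B z.
Proof.
  intros Hcov. induction k as [|k IH]; intros Hz.
  - exists box0. split; [left; reflexivity | intros i Hi; lia].
  - destruct IH as [B [HB HBz]]; [intros; apply Hz; lia|].
    destruct (Hcov _ _ (Hz k ltac:(lia))) as [Q [HQ HQz]].
    exists (box_ext2 B (2 * k) Q). split.
    + apply in_flat_map. exists B. split; [exact HB | apply in_map, HQ].
    + replace (2 * S k)%nat with (S (S (2 * k))) by lia. apply in_box_ext2; assumption.
Qed.

Definition level_cover (h : R) (j : nat) : list box :=
  annulus_cover (INR j * h) (INR (S j) * h) (PI * h * h).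

Lemma level_cover_covers h j p : 0 < h ->
  INR j * h <= p 0%nat * p 0%nat + p 1%nat * p 1%nat <= INR (S j) * h ->
  exists Q, In Q (level_cover h j) /\ in_box 2 Q p.
Proof.
  intros Hh Hp. pose proof (pos_INR j).
  apply annulus_cover_covers; [nra | rewrite S_INR; nra | exact Hp].
Qed.

Lemma level_cover_vol h j : 0 < h -> lsum (map (box_vol 2) (level_cover h j)) <= PI * (h + h * h).
Proof.
  intros Hh. pose proof PI_RGT_0. pose proof (pos_INR j).
  assert (0 < PI * h * h) by (apply Rmult_lt_0_compat; [apply Rmult_lt_0_compat|]; lra).
  eapply Rle_trans; [apply annulus_cover_vol; rewrite ?S_INR; try split; nra|].
  rewrite S_INR. right. ring.
Qed.

Definition above (theta : R) (W : R) : bool := if Rle_dec theta W then true else false.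

Lemma lsum_filter_markov {T} (W F : T -> R) theta c l : 0 < theta -> 0 <= c ->
  (forall x, 0 <= W x) -> (forall x, In x l -> theta <= W x -> F x <= c) ->
  lsum (map F (filter (fun x => above theta (W x)) l)) <= c / theta * lsum (map W l).
Proof.
  intros Ht Hc HW HF. rewrite <- lsum_map_scal. apply lsum_filter_le.
  - intros x Hx. unfold above. destruct (Rle_dec theta (W x)) as [Hle|]; [intros _|discriminate].
    apply Rle_trans with c; [apply HF; auto|].
    replace c with (c / theta * theta) at 1 by (field; lra).
    apply Rmult_le_compat_l; [apply Rdiv_le_0_compat|]; lra.
  - intros x _. apply Rmult_le_pos; [apply Rdiv_le_0_compat; lra | apply HW].
Qed.

(* One product of annulus covers per level vector of cost at most [Lam]; counting these vectors
   with weight [exp (Lam - cost)] is the exponential Chebyshev inequality. *)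
Lemma lebesgue_outer_le_level_sets (n J : nat) (h H Lam : R) (c : nat -> R)
    (A : (nat -> R) -> Prop) : 0 < h -> 0 <= H ->
  (forall w, A w -> 0 <= w (2 * n)%nat <= H /\
     exists lv : nat -> nat,
       (forall x, (x < n)%nat -> (lv x <= J)%nat /\
          INR (lv x) * h <= w (2 * x)%nat * w (2 * x)%nat + w (2 * x + 1)%nat * w (2 * x + 1)%nat
          <= INR (S (lv x)) * h) /\
       fsum n (fun x => c (lv x)) <= Lam) ->
  lebesgue_outer_le (2 * n + 1) A
    (H * exp Lam * (PI * (h + h * h) * fsum (S J) (fun j => exp (- c j))) ^ n).
Proof.
  intros Hh HH HA.
  set (alpha := PI * (h + h * h)).
  assert (Halpha : 0 <= alpha) by (pose proof PI_RGT_0; unfold alpha; nra).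
  set (W := fun l : list nat => fprod n (fun x => exp (- c (nth x l 0%nat)))).
  assert (HW : forall l, 0 <= W l) by (intros l; apply fprod_nonneg; intros; left; apply exp_pos).
  set (adm := filter (fun l => above (exp (- Lam)) (W l)) (level_vectors n J)).
  set (L := map (fun B => box_ext B (2 * n) 0 H) (flat_map (fun l => prod_cover (level_cover h) l n) adm)).
  replace (2 * n + 1)%nat with (S (2 * n)) by lia.
  apply (lebesgue_outer_le_of_list _ _ L); [lia| |].
  - intros w Hw. destruct (HA w Hw) as [Hlast [lv [Hlv Hcost]]].
    set (l := map lv (seq 0 n)).
    assert (Hnth : forall x, (x < n)%nat -> nth x l 0%nat = lv x).
    { intros x Hx. unfold l. rewrite nth_indep with (d' := lv 0%nat) by (rewrite length_map, length_seq; auto).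
      rewrite map_nth, seq_nth by auto. reflexivity. }
    assert (Hadm : In l adm).
    { apply filter_In. split; [apply in_level_vectors; intros; apply Hlv; auto|].
      unfold above, W. rewrite (fprod_ext n _ (fun x => exp (- c (lv x)))) by (intros; rewrite Hnth; auto).
      rewrite fprod_exp_opp. destruct Rle_dec as [|Hno]; [reflexivity|].
      exfalso. apply Hno, exp_le_exp. lra. }
    destruct (prod_cover_covers (level_cover h)
                (fun j p => INR j * h <= p 0%nat * p 0%nat + p 1%nat * p 1%nat <= INR (S j) * h)
                l n w) as [B [HB HBw]].
    { intros j p. apply level_cover_covers, Hh. }
    { intros x Hx. rewrite Hnth by auto. cbv beta. rewrite Nat.add_0_r. apply Hlv, Hx. }
    exists (box_ext B (2 * n) 0 H). split.
    + apply (in_map (fun B' => box_ext B' (2 * n) 0 H)), in_flat_map. exists l. split; assumption.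
    + apply in_box_ext; assumption.
  - unfold L. rewrite map_map.
    rewrite (lsum_map_ext _ (fun B => box_vol (2 * n) B * H))
      by (intros; rewrite box_ext_vol, Rminus_0_r, Rmax_right by lra; reflexivity).
    rewrite lsum_map_scal_r, lsum_flat_map, Rmult_comm, Rmult_assoc.
    apply Rmult_le_compat_l; [exact HH|].
    eapply Rle_trans.
    { apply (lsum_filter_markov W _ (exp (- Lam)) (alpha ^ n)); [apply exp_pos | apply pow_le; auto | auto|].
      intros l _ _. apply prod_cover_vol; [exact Halpha|]. intros j. apply level_cover_vol, Hh. }
    unfold W. rewrite (lsum_fprod_level_vectors n J (fun j => exp (- c j))), exp_Ropp, Rpow_mult_distr.
    right. field. apply Rgt_not_eq, exp_pos.
Qed.

Definition level_cost (lam m t v : R) : R := if Rle_dec v t then lam * v else m.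

Lemma lower_bound_of_sqr s A D : 0 <= s -> 0 < A -> 0 <= D -> A * A - D <= s * s -> A - D / A <= s.
Proof.
  intros Hs HA HD H. destruct (Rle_dec A s).
  - assert (0 <= D / A) by (apply Rdiv_le_0_compat; lra). lra.
  - assert (A * A - D <= s * A) by nra.
    apply (Rmult_le_reg_r A); [exact HA|].
    replace ((A - D / A) * A) with (A * A - D) by (field; lra). lra.
Qed.

(* Small coordinates ([v x <= t]) cost [lam v x <= lam u x]; large ones cost [m] and there are
   at most [R / t] of them. Since small ones contribute at most [(t + h) u x] to
   [sum u^2 >= A^2], the large ones carry mass at least [A - (t + h) R / A]. *)
Lemma fsum_level_cost_le n u v h t lam m A R :
  0 <= h -> 0 < t -> 0 < lam -> 0 <= m -> 0 < A ->
  (forall x, v x <= u x <= v x + h) -> (forall x, 0 <= u x) ->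
  fsum n u <= R -> A * A <= fsum n (fun x => u x * u x) ->
  fsum n (fun x => level_cost lam m t (v x)) <= lam * (R - A + (t + h) * R / A) + m * (R / t).
Proof.
  intros Hh Ht Hlam Hm HA Hv Hu HS2 HS4.
  set (small := fun x => if Rle_dec (v x) t then u x else 0).
  set (large := fun x => if Rle_dec (v x) t then 0 else u x).
  set (is_large := fun x => if Rle_dec (v x) t then 0 else 1).
  assert (Hcost : forall x, level_cost lam m t (v x) <= lam * small x + m * is_large x).
  { intros x. unfold level_cost, small, is_large. specialize (Hv x).
    destruct Rle_dec; nra. }
  assert (Hcount : forall x, t * is_large x <= u x).
  { intros x. unfold is_large. specialize (Hv x). specialize (Hu x). destruct Rle_dec; lra. }
  assert (Hsplit : forall x, small x + large x = u x).
  { intros x. unfold small, large. destruct Rle_dec; ring. }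
  assert (Hsq : forall x, u x * u x <= (t + h) * small x + large x * large x).
  { intros x. unfold small, large. specialize (Hv x). specialize (Hu x). destruct Rle_dec; nra. }
  assert (Hsmall0 : forall x, 0 <= small x) by (intros x; unfold small; specialize (Hu x); destruct Rle_dec; lra).
  assert (Hlarge0 : forall x, 0 <= large x) by (intros x; unfold large; specialize (Hu x); destruct Rle_dec; lra).
  assert (HR : 0 <= R) by (pose proof (fsum_nonneg n u ltac:(auto)); lra).
  assert (Ssmall : 0 <= fsum n small) by (apply fsum_nonneg; auto).
  assert (Slarge : 0 <= fsum n large) by (apply fsum_nonneg; auto).
  assert (Ssplit : fsum n small + fsum n large = fsum n u)
    by (rewrite <- fsum_plus; apply fsum_ext; auto).
  assert (Scount : fsum n is_large <= R / t).
  { apply (Rmult_le_reg_l t); [exact Ht|]. replace (t * (R / t)) with R by (field; lra).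
    rewrite <- fsum_scal. eapply Rle_trans; [apply fsum_le; intros; apply Hcount | exact HS2]. }
  assert (Smass : A - (t + h) * R / A <= fsum n large).
  { apply lower_bound_of_sqr; auto; [nra|].
    assert (fsum n (fun x => u x * u x) <= (t + h) * fsum n small + fsum n large * fsum n large).
    { pose proof (fsum_sqr_le_sqr_fsum n large ltac:(auto)).
      assert (fsum n (fun x => u x * u x)
              <= fsum n (fun x => (t + h) * small x + large x * large x)) by (apply fsum_le; auto).
      rewrite fsum_plus, fsum_scal in *. lra. }
    nra. }
  eapply Rle_trans; [apply fsum_le; intros; apply Hcost|].
  rewrite fsum_plus, !fsum_scal.
  apply Rplus_le_compat; apply Rmult_le_compat_l; lra.
Qed.

Lemma fsum_exp_level_cost_le lam m t h K : 0 < lam -> 0 < h ->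
  fsum K (fun j => exp (- level_cost lam m t (INR j * h)))
  <= 1 / (1 - exp (- lam * h)) + INR K * exp (- m).
Proof.
  intros Hlam Hh. set (q := exp (- lam * h)).
  assert (Hq : 0 <= q < 1).
  { split; [left; apply exp_pos|]. rewrite <- exp_0. apply exp_increasing. nra. }
  rewrite <- fsum_const. eapply Rle_trans; [|apply Rplus_le_compat_r, (fsum_geom_le q K Hq)].
  rewrite <- fsum_plus. apply fsum_le. intros j _.
  assert (Eq : exp (- (lam * (INR j * h))) = q ^ j).
  { unfold q. rewrite <- Rpower_pow by apply exp_pos. unfold Rpower. rewrite ln_exp. f_equal. ring. }
  pose proof (exp_pos (- m)). pose proof (pow_le q j (proj1 Hq)).
  unfold level_cost. destruct Rle_dec; [rewrite Eq|]; lra.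
Qed.

(** * The bound for a fixed choice of parameters *)

Lemma cabs_sqr z x : cabs z x ^ 2 = z (2 * x)%nat * z (2 * x)%nat + z (2 * x + 1)%nat * z (2 * x + 1)%nat.
Proof. unfold cabs. rewrite pow2_sqrt by nra. ring. Qed.

Lemma Gamma_level_cost_le n a b e h t lam m A w :
  e = Rpower (INR n) (- (1 / 5)) -> 0 < h -> 0 < t -> 0 < lam -> 0 <= m -> 0 < A ->
  A * A <= a ^ 2 * INR n ^ 2 * (1 - e) -> Gamma n a b w ->
  let R := b * INR n * (1 + e) in
  fsum n (fun x => level_cost lam m t (INR (level h (cabs w x ^ 2)) * h))
  <= lam * (R - A + (t + h) * R / A) + m * (R / t).
Proof.
  intros He Hh Ht Hlam Hm HA HAA [[HS4 _] [_ HS2]] R. cbv zeta in HS2, HS4. rewrite <- He in HS2, HS4.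
  set (u := fun x => cabs w x ^ 2).
  assert (Hu : forall x, 0 <= u x) by (intros; apply pow2_ge_0).
  apply (fsum_level_cost_le n u); [lra | exact Ht | exact Hlam | exact Hm | exact HA | | exact Hu | exact HS2 |].
  - intros x. pose proof (level_spec h _ Hh (Hu x)). rewrite S_INR in H. unfold u in *. lra.
  - eapply Rle_trans; [exact HAA|]. eapply Rle_trans; [exact HS4|].
    right. apply fsum_ext. intros. unfold u. ring.
Qed.

Lemma Zsubgraph_outer_le beta n a b e h t lam m A :
  (0 < n)%nat -> e = Rpower (INR n) (- (1 / 5)) -> 0 <= beta -> 0 <= b ->
  0 < h -> 0 < t -> 0 < lam -> 0 <= m -> 0 < A ->
  A * A <= a ^ 2 * INR n ^ 2 * (1 - e) ->
  let R := b * INR n * (1 + e) in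
  lebesgue_outer_le (2 * n + 1) (Zsubgraph beta n a b)
    (exp (beta / INR n * (a ^ 2 * INR n ^ 2 * (1 + e)))
     * exp (lam * (R - A + (t + h) * R / A) + m * (R / t))
     * (PI * (h + h * h) * (1 / (1 - exp (- lam * h)) + (R / h + 2) * exp (- m))) ^ n).
Proof.
  intros Hn He Hbeta Hb Hh Ht Hlam Hm HA HAA R.
  pose proof (lt_0_INR n Hn) as HN.
  assert (He0 : 0 < e) by (rewrite He; apply exp_pos).
  assert (HR : 0 <= R) by (unfold R; apply Rmult_le_pos; [apply Rmult_le_pos|]; lra).
  set (J := S (level h R)).
  eapply lebesgue_outer_le_mono.
  - apply (lebesgue_outer_le_level_sets n J h (exp (beta / INR n * (a ^ 2 * INR n ^ 2 * (1 + e))))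
             (lam * (R - A + (t + h) * R / A) + m * (R / t)) (fun j => level_cost lam m t (INR j * h)));
      [exact Hh | left; apply exp_pos|].
    intros w [HG Hw]. split.
    { split; [apply Hw|]. eapply Rle_trans; [apply Hw|]. apply exp_le_exp.
      destruct HG as [[_ HS4] _]. rewrite <- He in HS4.
      apply Rmult_le_compat_l; [apply Rdiv_le_0_compat; lra | exact HS4]. }
    exists (fun x => level h (cabs w x ^ 2)). split.
    + intros x Hx. pose proof (level_spec h _ Hh (pow2_ge_0 (cabs w x))) as Hlev.
      rewrite cabs_sqr in Hlev |- *. split; [|exact Hlev].
      destruct HG as [_ [_ HS2]]. rewrite <- He in HS2. pose proof (level_spec h R Hh HR).
      assert (cabs w x ^ 2 <= R).
      { eapply Rle_trans; [apply (fsum_term_le n (fun x => cabs w x ^ 2) x)|exact HS2];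
          [intros; apply pow2_ge_0 | exact Hx]. }
      rewrite cabs_sqr in H0. apply INR_le, (Rmult_le_reg_r h); [exact Hh|]. unfold J. lra.
    + apply (Gamma_level_cost_le n a b); assumption.
  - assert (Halpha : 0 <= PI * (h + h * h)) by (pose proof PI_RGT_0; nra).
    assert (HJ : INR (S J) <= R / h + 2).
    { pose proof (level_spec h R Hh HR). unfold J. rewrite !S_INR.
      apply (Rmult_le_reg_r h); [exact Hh|]. replace ((R / h + 2) * h) with (R + 2 * h) by (field; lra).
      lra. }
    apply Rmult_le_compat_l; [apply Rmult_le_pos; left; apply exp_pos|].
    apply pow_incr. split.
    + apply Rmult_le_pos; [exact Halpha|]. apply fsum_nonneg. intros; left; apply exp_pos.
    + apply Rmult_le_compat_l; [exact Halpha|].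
      eapply Rle_trans; [apply fsum_exp_level_cost_le; auto|].
      apply Rplus_le_compat_l, Rmult_le_compat_r; [left; apply exp_pos | exact HJ].
Qed.

(** * Choice of the parameters *)

Lemma ln_le_sub1 x : 0 < x -> ln x <= x - 1.
Proof. intros Hx. pose proof (exp_ineq1_le (ln x)). rewrite exp_ln in H by exact Hx. lra. Qed.

Lemma Rpower_pos x y : 0 < Rpower x y.
Proof. apply exp_pos. Qed.

Lemma one_minus_exp_opp_ge x : 0 < x -> x / (1 + x) <= 1 - exp (- x).
Proof.
  intros Hx. pose proof (exp_ineq1_le x). pose proof (exp_pos x).
  rewrite exp_Ropp. apply (Rmult_le_reg_r (exp x * (1 + x))); [apply Rmult_lt_0_compat; lra|].
  replace (x / (1 + x) * (exp x * (1 + x))) with (x * exp x) by (field; lra).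
  replace ((1 - / exp x) * (exp x * (1 + x))) with ((exp x - 1) * (1 + x)) by (field; lra).
  nra.
Qed.

Lemma chernoff_base_le h lam R m d s p :
  0 < h -> 0 < lam -> 0 <= R -> 0 < d -> 0 <= s -> 0 < p -> / lam <= d + s ->
  p * (h + h * h) * (1 / (1 - exp (- lam * h)) + (R / h + 2) * exp (- m))
  <= exp (ln p + ln d + s / d + h + lam * h + lam * (R + 2 * h) * exp (- m)).
Proof.
  intros Hh Hlam HR Hd Hs Hp Hinv.
  assert (Hx : 0 < lam * h) by nra.
  pose proof (one_minus_exp_opp_ge (lam * h) Hx) as H1.
  replace (- (lam * h)) with (- lam * h) in H1 by ring.
  set (q := exp (- lam * h)) in *.
  assert (Hq1 : 0 < 1 - q) by (eapply Rlt_le_trans; [apply Rdiv_lt_0_compat|exact H1]; lra).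
  assert (Hhq : h / (1 - q) <= / lam + h).
  { apply (Rmult_le_reg_r (1 - q)); [exact Hq1|].
    replace (h / (1 - q) * (1 - q)) with h by (field; lra).
    apply Rle_trans with ((/ lam + h) * (lam * h / (1 + lam * h))).
    - right. field. nra.
    - apply Rmult_le_compat_l; [pose proof (Rinv_0_lt_compat lam Hlam)|]; lra. }
  set (em := exp (- m)). assert (Hem : 0 < em) by apply exp_pos.
  set (Z := lam * h + lam * (R + 2 * h) * em).
  assert (HZ : 0 <= Z) by (unfold Z; assert (0 <= lam * (R + 2 * h) * em) by (apply Rmult_le_pos; nra); nra).
  replace (p * (h + h * h) * (1 / (1 - q) + (R / h + 2) * em))
    with (p * (1 + h) * (h / (1 - q) + (R + 2 * h) * em)) by (field; lra).
  apply Rle_trans with (p * (1 + h) * (/ lam * (1 + Z))).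
  { apply Rmult_le_compat_l; [apply Rmult_le_pos; lra|].
    replace (/ lam * (1 + Z)) with (/ lam + h + (R + 2 * h) * em) by (unfold Z; field; lra). lra. }
  replace (ln p + ln d + s / d + h + lam * h + lam * (R + 2 * h) * em)
    with (ln p + ln d + s / d + h + Z) by (unfold Z; ring).
  rewrite !exp_plus, !exp_ln by assumption.
  pose proof (exp_ineq1_le (s / d)). pose proof (exp_ineq1_le h). pose proof (exp_ineq1_le Z).
  assert (/ lam <= d * exp (s / d)).
  { eapply Rle_trans; [exact Hinv|].
    replace (d + s) with (d * (1 + s / d)) by (field; lra). apply Rmult_le_compat_l; lra. }
  assert (0 < / lam) by (apply Rinv_0_lt_compat, Hlam).
  replace (p * d * exp (s / d) * exp h * exp Z) with (p * exp h * (d * exp (s / d) * exp Z)) by ring.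
  apply Rmult_le_compat; [apply Rmult_le_pos; lra | apply Rmult_le_pos; lra
                         | apply Rmult_le_compat_l; lra | apply Rmult_le_compat; lra].
Qed.

Definition bound_const (beta B : R) : R :=
  let K := 2 * B + 2 in beta * B ^ 3 + 8 * B + 2 * B * B * (7 + K) + 3 * B + 2.

Lemma bound_const_nonneg beta B : 0 <= beta -> 0 < B -> 0 <= bound_const beta B.
Proof.
  intros Hbeta HB. unfold bound_const.
  assert (0 <= beta * B ^ 3) by (apply Rmult_le_pos; [lra | apply pow_le; lra]). nra.
Qed.

Section ParameterChoice.

Variables (beta B eps : R) (n : nat) (a b : R).
Hypotheses (Hbeta : 0 <= beta) (HB : 0 < B) (Heps : 0 < eps < 1 / 5) (Hn : 32 <= INR n)
  (Ha : Rpower (INR n) (- (2 * eps / 5)) < a) (Hab : a < b) (HbB : b <= B).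

Let N := INR n.
Let e := Rpower N (- (1 / 5)).
Let P := Rpower N (4 / 5 + eps).
Let d := b - a.
Let h := 1 / N.
Let t := sqrt N.
Let A := a * N * (1 - e).
Let R := b * N * (1 + e).
Let lam := N / (R - A).
Let K := 2 * B + 2.
Let m := 2 * ln N + ln K.

Lemma Rpower_N_le x y : x <= y -> Rpower N x <= Rpower N y.
Proof. intros. apply Rle_Rpower; [unfold N; lra | exact H]. Qed.

Lemma e_le_half : 0 < e <= 1 / 2.
Proof.
  split; [apply Rpower_pos|].
  assert (2 <= Rpower N (1 / 5)).
  { replace 2 with (Rpower 32 (1 / 5)); [apply Rle_Rpower_l; unfold N; lra|].
    replace 32 with (Rpower 2 (INR 5)) by (rewrite Rpower_pow by lra; simpl; ring).
    rewrite Rpower_mult. replace (INR 5 * (1 / 5)) with 1 by (simpl; field). apply Rpower_1; lra. }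
  unfold e. rewrite Rpower_Ropp. replace (1 / 2) with (/ 2) by field. apply Rinv_le_contravar; lra.
Qed.

Lemma N_mul_e : N * e = Rpower N (4 / 5).
Proof.
  unfold e. rewrite <- (Rpower_1 N) at 1 by (unfold N; lra). rewrite <- Rpower_plus. f_equal. field.
Qed.

Lemma sqrt_N_eq : t = Rpower N (1 / 2).
Proof. unfold t. rewrite <- Rpower_sqrt by (unfold N; lra). f_equal. field. Qed.

Lemma a_pos : 0 < a.
Proof. pose proof (Rpower_pos N (- (2 * eps / 5))). fold N in Ha. lra. Qed.

Lemma inv_a_le : / a <= Rpower N (2 * eps / 5).
Proof.
  pose proof a_pos. fold N in Ha.
  replace (Rpower N (2 * eps / 5)) with (/ Rpower N (- (2 * eps / 5)))
    by (rewrite Rpower_Ropp; apply Rinv_inv).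
  left. apply Rinv_lt_contravar; [apply Rmult_lt_0_compat; [apply Rpower_pos | lra] | exact Ha].
Qed.

Lemma R_minus_A : R - A = N * (d + (a + b) * e).
Proof. unfold R, A, d. ring. Qed.

Lemma lam_spec : 0 < lam /\ / lam = d + (a + b) * e /\ lam <= / d.
Proof.
  pose proof e_le_half. pose proof a_pos.
  assert (0 < d) by (unfold d; lra). assert (0 < N) by (unfold N; lra).
  assert (0 < d + (a + b) * e) by nra.
  unfold lam. rewrite R_minus_A.
  replace (N / (N * (d + (a + b) * e))) with (/ (d + (a + b) * e)) by (field; lra).
  split; [apply Rinv_0_lt_compat; lra|]. split; [apply Rinv_inv|].
  apply Rinv_le_contravar; nra.
Qed.

Lemma A_sqr_le : A * A <= a ^ 2 * N ^ 2 * (1 - e).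
Proof.
  pose proof e_le_half. unfold A.
  replace (a * N * (1 - e) * (a * N * (1 - e))) with ((a * N) ^ 2 * ((1 - e) * (1 - e))) by ring.
  replace (a ^ 2 * N ^ 2 * (1 - e)) with ((a * N) ^ 2 * (1 - e)) by ring.
  apply Rmult_le_compat_l; [apply pow2_ge_0 | nra].
Qed.

Lemma P_ge : Rpower N (4 / 5) <= P /\ 1 <= P.
Proof.
  split; [apply Rpower_N_le; lra|].
  rewrite <- (Rpower_O N) by (unfold N; lra). apply Rpower_N_le. lra.
Qed.

Lemma t_spec : 1 <= t /\ t * t = N.
Proof.
  split; [rewrite <- sqrt_1; apply sqrt_le_1_alt; unfold N; lra | apply sqrt_sqrt; unfold N; lra].
Qed.

Lemma d_spec : 0 < d /\ 1 <= B / d.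
Proof.
  assert (0 < d) by (unfold d; pose proof a_pos; lra). split; [exact H|].
  apply (Rmult_le_reg_r d); [exact H|]. replace (B / d * d) with B by (field; lra).
  unfold d. pose proof a_pos. lra.
Qed.

Lemma R_le : 0 <= R <= 2 * B * N.
Proof.
  pose proof e_le_half. pose proof a_pos. assert (0 < N) by (unfold N; lra).
  unfold R. split; [apply Rmult_le_pos; [apply Rmult_le_pos|]; lra|].
  assert (b * (1 + e) <= 2 * B) by nra. nra.
Qed.

Lemma height_term_le : beta * a ^ 2 * (N * e) <= beta * B ^ 3 * P / d.
Proof.
  destruct P_ge as [HP45 HP1]. destruct d_spec as [Hd HBd]. pose proof a_pos.
  assert (a ^ 2 * (N * e) <= B ^ 2 * P).
  { rewrite N_mul_e. apply Rmult_le_compat; [apply pow2_ge_0 | left; apply Rpower_pos | | lra].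
    simpl. nra. }
  replace (beta * B ^ 3 * P / d) with (beta * (B ^ 2 * P * (B / d))) by (field; lra).
  rewrite Rmult_assoc. apply Rmult_le_compat_l; [exact Hbeta|].
  assert (0 <= B ^ 2 * P) by (apply Rmult_le_pos; [apply pow2_ge_0 | lra]). nra.
Qed.

Lemma large_mass_term_le : lam * ((t + h) * R / A) <= 8 * B * P / d.
Proof.
  destruct P_ge as [_ HP1]. destruct d_spec as [Hd _]. destruct t_spec as [Ht1 Htt].
  destruct lam_spec as [Hlam [_ Hlamd]]. destruct R_le as [HR0 HR]. pose proof a_pos.
  pose proof e_le_half. assert (HN : 32 <= N) by exact Hn.
  assert (Hh : h <= t) by (unfold h; apply Rle_trans with 1; [apply Rdiv_le_1|]; lra).
  assert (Hh0 : 0 < h) by (unfold h; apply Rdiv_lt_0_compat; lra).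
  assert (HaN : 0 < a * N) by nra.
  assert (HA2 : a * N / 2 <= A) by (unfold A; nra).
  assert (HA : 0 < A) by nra.
  assert (Q1 : (t + h) * R / A <= 8 * B * t * / a).
  { apply (Rmult_le_reg_r A); [exact HA|]. replace ((t + h) * R / A * A) with ((t + h) * R) by (field; lra).
    assert (0 < / a) by (apply Rinv_0_lt_compat; lra).
    assert (8 * B * t * / a * (a * N / 2) = 4 * B * t * N) by (field; lra).
    assert (8 * B * t * / a * (a * N / 2) <= 8 * B * t * / a * A)
      by (apply Rmult_le_compat_l; [assert (0 <= 8 * B * t) by nra; nra | exact HA2]).
    assert ((t + h) * R <= 2 * t * (2 * B * N)) by (apply Rmult_le_compat; lra).
    nra. }
  assert (Q2 : t * / a <= P).
  { eapply Rle_trans; [apply Rmult_le_compat_l; [lra | apply inv_a_le]|].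
    rewrite sqrt_N_eq, <- Rpower_plus. apply Rpower_N_le. lra. }
  assert (0 <= (t + h) * R / A).
  { apply Rdiv_le_0_compat; [apply Rmult_le_pos|]; lra. }
  apply Rle_trans with (/ d * (8 * B * P)); [apply Rmult_le_compat; nra | right; field; lra].
Qed.

Lemma large_count_term_le : m * (R / t) <= 2 * B * B * (7 + K) * P / d.
Proof.
  destruct P_ge as [_ HP1]. destruct d_spec as [Hd HBd]. destruct t_spec as [Ht1 Htt].
  destruct R_le as [HR0 HR]. assert (HN : 32 <= N) by exact Hn.
  assert (HK : 2 <= K) by (unfold K; lra).
  set (Q := Rpower N (3 / 10)). assert (HQ0 : 0 < Q) by apply Rpower_pos.
  assert (HlnN : ln N <= 10 / 3 * Q).
  { pose proof (ln_le_sub1 Q HQ0). unfold Q in *. rewrite ln_Rpower in H. lra. }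
  assert (HlnK : ln K <= K) by (pose proof (ln_le_sub1 K ltac:(lra)); lra).
  assert (Hm : m <= 20 / 3 * Q + K) by (unfold m; lra).
  assert (HlnN0 : 0 <= ln N) by (rewrite <- ln_1; left; apply ln_increasing; lra).
  assert (HlnK0 : 0 <= ln K) by (rewrite <- ln_1; left; apply ln_increasing; lra).
  assert (HRt : R / t <= 2 * B * t).
  { apply (Rmult_le_reg_r t); [lra|]. replace (R / t * t) with R by (field; lra). nra. }
  assert (HtQ : t * Q <= P).
  { unfold Q. rewrite sqrt_N_eq, <- Rpower_plus. apply Rpower_N_le. lra. }
  assert (m * (R / t) <= (20 / 3 * Q + K) * (2 * B * t)).
  { apply Rmult_le_compat; [unfold m; lra | apply Rdiv_le_0_compat; lra | exact Hm | exact HRt]. }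
  assert ((20 / 3 * Q + K) * (2 * B * t) <= 2 * B * (7 + K) * P).
  { replace ((20 / 3 * Q + K) * (2 * B * t)) with (2 * B * (20 / 3 * (t * Q) + K * t)) by ring.
    replace (2 * B * (7 + K) * P) with (2 * B * ((7 + K) * P)) by ring.
    apply Rmult_le_compat_l; [lra|].
    assert (t <= P) by (rewrite sqrt_N_eq; apply Rpower_N_le; lra).
    assert (K * t <= K * P) by (apply Rmult_le_compat_l; lra). nra. }
  replace (2 * B * B * (7 + K) * P / d) with (2 * B * (7 + K) * P * (B / d)) by (field; lra).
  assert (0 <= 2 * B * (7 + K) * P) by (apply Rmult_le_pos; [|lra]; nra). nra.
Qed.

Lemma level_width_terms_le :
  N * (lam * h) <= P / d /\ N * (lam * (R + 2 * h) * exp (- m)) <= P / d.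
Proof.
  destruct P_ge as [_ HP1]. destruct d_spec as [Hd _]. destruct lam_spec as [Hlam [_ Hlamd]].
  destruct R_le as [HR0 HR]. assert (HN : 32 <= N) by exact Hn. pose proof e_le_half.
  assert (HK : 2 <= K) by (unfold K; lra).
  assert (HPd : / d <= P / d) by (unfold Rdiv; rewrite <- (Rmult_1_l (/ d)) at 1;
    apply Rmult_le_compat_r; [left; apply Rinv_0_lt_compat|]; lra).
  split.
  - replace (N * (lam * h)) with lam by (unfold h; field; lra). lra.
  - assert (Hem : exp (- m) = / (N * N * K)).
    { unfold m. rewrite exp_Ropp, exp_plus. replace (2 * ln N) with (ln N + ln N) by ring.
      rewrite exp_plus, !exp_ln by lra. reflexivity. }
    assert (HR2 : R + 2 * h <= K * N).
    { unfold K. assert (h <= 1) by (unfold h; apply Rdiv_le_1; lra). nra. }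
    rewrite Hem. apply Rle_trans with (N * (lam * (K * N) * / (N * N * K))).
    + apply Rmult_le_compat_l; [lra|]. apply Rmult_le_compat_r; [left; apply Rinv_0_lt_compat; nra|].
      apply Rmult_le_compat_l; lra.
    + replace (N * (lam * (K * N) * / (N * N * K))) with lam by (field; lra). lra.
Qed.

Lemma exponent_le :
  beta / N * (a ^ 2 * N ^ 2 * (1 + e)) + (lam * (R - A + (t + h) * R / A) + m * (R / t))
  + INR n * (ln PI + ln d + 2 * B * e / d + h + lam * h + lam * (R + 2 * h) * exp (- m))
  <= INR n * Lfun beta a b + (32 + bound_const beta B) * P / d.
Proof.
  fold N. destruct P_ge as [HP45 HP1]. destruct d_spec as [Hd HBd]. pose proof e_le_half.
  destruct (level_width_terms_le) as [T6 T7].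
  pose proof height_term_le as T1. pose proof large_mass_term_le as T2.
  pose proof large_count_term_le as T3.
  assert (HN : 32 <= N) by exact Hn.
  assert (HPd : 0 <= P / d) by (apply Rdiv_le_0_compat; lra).
  assert (T4 : N * (2 * B * e / d) <= 2 * (B * P / d)).
  { replace (N * (2 * B * e / d)) with (2 * B * (N * e) / d) by (field; lra).
    replace (2 * (B * P / d)) with (2 * B * P / d) by (field; lra).
    unfold Rdiv. apply Rmult_le_compat_r; [left; apply Rinv_0_lt_compat; lra|].
    rewrite N_mul_e. nra. }
  assert (T5 : N * h <= B * P / d).
  { replace (N * h) with 1 by (unfold h; field; lra).
    replace (B * P / d) with (P * (B / d)) by (field; lra). nra. }
  assert (HA : 0 < A) by (unfold A; pose proof a_pos; assert (0 < a * N) by nra; nra).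
  assert (Hlam : lam * (R - A) = N).
  { unfold lam. field. rewrite R_minus_A. pose proof a_pos.
    apply Rgt_not_eq, Rmult_lt_0_compat; nra. }
  assert (E : beta / N * (a ^ 2 * N ^ 2 * (1 + e)) = beta * a ^ 2 * N + beta * a ^ 2 * (N * e))
    by (field; lra).
  rewrite E. unfold Lfun, bound_const. fold d K.
  replace ((32 + (beta * B ^ 3 + 8 * B + 2 * B * B * (7 + K) + 3 * B + 2)) * P / d)
    with (32 * (P / d) + beta * B ^ 3 * P / d + 8 * B * P / d + 2 * B * B * (7 + K) * P / d
          + 3 * (B * P / d) + 2 * (P / d)) by (field; lra).
  replace (lam * (R - A + (t + h) * R / A)) with (N + lam * ((t + h) * R / A))
    by (rewrite <- Hlam; field; lra).
  lra.
Qed.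

Lemma Zsubgraph_outer_le_exp : lebesgue_outer_le (2 * n + 1) (Zsubgraph beta n a b)
  (exp (INR n * Lfun beta a b + (32 + bound_const beta B) * Rpower (INR n) (4 / 5 + eps) / (b - a))).
Proof.
  fold N P d. pose proof e_le_half. pose proof a_pos. destruct t_spec as [Ht1 _].
  destruct lam_spec as [Hlam [Hinvlam _]]. destruct R_le as [HR0 _]. destruct d_spec as [Hd _].
  assert (HN : 32 <= N) by exact Hn.
  assert (Hn0 : (0 < n)%nat) by (apply INR_lt; simpl; fold N; lra).
  assert (Hh : 0 < h) by (unfold h; apply Rdiv_lt_0_compat; lra).
  assert (HK : 1 <= K) by (unfold K; lra).
  assert (Hm : 0 <= m).
  { unfold m. pose proof (Rlt_le _ _ (ln_increasing 1 N ltac:(lra) ltac:(lra))).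
    destruct (Req_dec K 1) as [->|HK1]; [rewrite ln_1 in *; lra|].
    pose proof (ln_increasing 1 K ltac:(lra) ltac:(lra)). rewrite ln_1 in *. lra. }
  assert (HA : 0 < A) by (unfold A; assert (0 < a * N) by nra; nra).
  eapply lebesgue_outer_le_mono.
  { apply (Zsubgraph_outer_le beta n a b e h t lam m A Hn0 eq_refl); try lra. apply A_sqr_le. }
  fold N. fold R.
  set (X := PI * (h + h * h) * (1 / (1 - exp (- lam * h)) + (R / h + 2) * exp (- m))).
  set (Y := ln PI + ln d + 2 * B * e / d + h + lam * h + lam * (R + 2 * h) * exp (- m)).
  assert (HXY : X <= exp Y).
  { apply chernoff_base_le; try lra; [nra | apply PI_RGT_0 | rewrite Hinvlam; nra]. }
  assert (HX : 0 <= X).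
  { pose proof (exp_pos (- m)). pose proof PI_RGT_0.
    assert (exp (- lam * h) < 1) by (rewrite <- exp_0; apply exp_increasing; nra).
    assert (0 <= 1 / (1 - exp (- lam * h))) by (apply Rdiv_le_0_compat; lra).
    assert (0 <= R / h + 2) by (pose proof (Rdiv_le_0_compat R h HR0 Hh); lra).
    unfold X. apply Rmult_le_pos; [nra|]. nra. }
  eapply Rle_trans.
  { apply Rmult_le_compat_l; [apply Rmult_le_pos; left; apply exp_pos|].
    apply pow_incr. split; [exact HX | exact HXY]. }
  rewrite <- (Rpower_pow n (exp Y)) by apply exp_pos. unfold Rpower. rewrite ln_exp, <- !exp_plus.
  apply exp_le_exp. pose proof exponent_le as Hexp. unfold Y. fold N in Hexp |- *. lra.
Qed.

End ParameterChoice.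

Theorem lemma3p2 :
  forall (beta B eps : R),
    0 <= beta -> 0 < B -> 0 < eps < 1/5 ->
    exists C : R, 0 < C /\
      forall (n : nat) (a b : R),
        C <= INR n ->
        Rpower (INR n) (- (2 * eps / 5)) < a -> a < b -> b <= B ->
        lebesgue_outer_le (2 * n + 1) (Zsubgraph beta n a b)
          (exp (INR n * Lfun beta a b
                + C * Rpower (INR n) (4/5 + eps) / (b - a))).
Proof.
  intros beta B eps Hbeta HB Heps.
  pose proof (bound_const_nonneg beta B Hbeta HB).
  exists (32 + bound_const beta B). split; [lra|].
  intros n a b HCn Ha Hab HbB.
  apply Zsubgraph_outer_le_exp; auto. lra.
Qed.
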